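(* Let $R$ be an associative ring with anti-involution $a\mapsto\bar a$. Define $\tilde N:=\tilde N_e^{C_2}i_e^*(\underline R^{\mathrm{fix}})$ by $\tilde N(C_2/e)=R\otimes R^{\mathrm{op}}$ with Weyl action $a\otimes b\mapsto\bar b\otimes\bar a$, and $\tilde N(C_2/C_2)=(\mathbb Z\{R\}\oplus(R\otimes R^{\mathrm{op}})/C_2)/\mathrm{TR}$, where TR identifies $\{a+b\}\sim\{a\}+\{b\}+[a\otimes\bar b]$. With restriction $\mathrm{res}\{a\}=a\otimes\bar a$, $\mathrm{res}[a\otimes b]=a\otimes b+\bar b\otimes\bar a$, transfer $\mathrm{tr}(a\otimes b)=[a\otimes b]$, the usual ring structure on $R\otimes R^{\mathrm{op}}$ at $C_2/e$, and multiplication at $C_2/C_2$ given by \[\{a\}\{b\}=\{ab\},\quad\{a\}[b\otimes c]=[ab\otimes c\bar a],\quad[a\otimes b]\{c\}=[ac\otimes\bar cb],\quad[a\otimes b][c\otimes d]=[ac\otimes db]+[a\bar d\otimes\bar cb],\] and unit sending $1\in\underline A(C_2/C_2)=\mathbb Z[t]/(t^2-2t)$ to $\{1\}$, $t$ to $[1\otimes1]$, and $1\in\underline A(C_2/e)=\mathbb Z$ to $1\otimes1$, $\tilde N$ is a well-defined $C_2$-Mackey functor and an associative $C_2$-Green functor.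
   Context: $C_2=\{e,\tau\}$. A $C_2$-Mackey functor consists of abelian groups at $C_2/C_2$ and $C_2/e$, an involution (Weyl action) on the $C_2/e$-level, restriction $\mathrm{res}$ into the invariants and transfer $\mathrm{tr}$ with $\mathrm{tr}(\tau x)=\mathrm{tr}(x)$ and $\mathrm{res}\,\mathrm{tr}(x)=x+\tau x$. An associative $C_2$-Green functor is a monoid for the box product, i.e. associative unital rings at both levels such that $\mathrm{res}$ is a ring map, the Weyl action is by ring maps, and Frobenius reciprocity $\mathrm{tr}(x)y=\mathrm{tr}(x\,\mathrm{res}(y))$, $y\,\mathrm{tr}(x)=\mathrm{tr}(\mathrm{res}(y)x)$ holds. $\underline A$ is the $C_2$-Burnside Mackey functor, the unit for the box product. An anti-involution satisfies $\bar{\bar a}=a$, $\overline{ab}=\bar b\bar a$, $\overline{a+b}=\bar a+\bar b$. $\mathbb Z\{R\}$ is the free abelian group on symbols $\{a\}$, $a\in R$, and $[a\otimes b]$ denotes the class of $a\otimes b$ in the $C_2$-coinvariants of $R\otimes R^{\mathrm{op}}$. *)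

From HB Require Import structures.
From mathcomp Require Import all_boot all_algebra.
From mathcomp.multinomials Require Import freeg.
Set Implicit Arguments. Unset Strict Implicit. Unset Printing Implicit Defensive.
Import GRing.Theory.
Local Open Scope ring_scope.

Inductive span (V : zmodType) (S : V -> Prop) : V -> Prop :=
  | span0 : span S 0
  | spanS x : S x -> span S x
  | spanB x y : span S x -> span S y -> span S (x - y).

Definition modeq (V : zmodType) (S : V -> Prop) (x y : V) : Prop := span S (x - y).

(* Generic axioms of a C2-Mackey functor / associative C2-Green functor *)
(* whose two levels are given as quotients M1/E1 (level C2/C2) and      *)
(* M0/E0 (level C2/e), with operations given on representatives.        *)
Section GenericAxioms.
Variables (M1 M0 : zmodType) (E1 : M1 -> M1 -> Prop) (E0 : M0 -> M0 -> Prop).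
Variables (res : M1 -> M0) (tr : M0 -> M1) (w : M0 -> M0).

Definition C2_mackey : Prop :=
  ((forall x y, E1 x y -> E0 (res x) (res y)) /\
   (forall x y, E0 x y -> E1 (tr x) (tr y)) /\
   (forall x y, E0 x y -> E0 (w x) (w y))) /\
  ((forall x y, E0 (res (x + y)) (res x + res y)) /\
   (forall x y, E1 (tr (x + y)) (tr x + tr y)) /\
   (forall x y, E0 (w (x + y)) (w x + w y))) /\
  ((forall x, E0 (w (w x)) x) /\
   (forall x, E0 (w (res x)) (res x)) /\
   (forall x, E1 (tr (w x)) (tr x)) /\
   (forall x, E0 (res (tr x)) (x + w x))).

Variables (mul1 : M1 -> M1 -> M1) (mul0 : M0 -> M0 -> M0) (one1 : M1) (one0 : M0).

Definition C2_green : Prop :=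
  C2_mackey /\
  [/\
      (forall x x' y y', E1 x x' -> E1 y y' -> E1 (mul1 x y) (mul1 x' y')) /\
      (forall x x' y y', E0 x x' -> E0 y y' -> E0 (mul0 x y) (mul0 x' y')),
      [/\ (forall x y z, E1 (mul1 x (y + z)) (mul1 x y + mul1 x z)),
          (forall x y z, E1 (mul1 (x + y) z) (mul1 x z + mul1 y z)),
          (forall x y z, E1 (mul1 x (mul1 y z)) (mul1 (mul1 x y) z)),
          (forall x, E1 (mul1 one1 x) x) &
          (forall x, E1 (mul1 x one1) x)],
      [/\ (forall x y z, E0 (mul0 x (y + z)) (mul0 x y + mul0 x z)),
          (forall x y z, E0 (mul0 (x + y) z) (mul0 x z + mul0 y z)),
          (forall x y z, E0 (mul0 x (mul0 y z)) (mul0 (mul0 x y) z)),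
          (forall x, E0 (mul0 one0 x) x) &
          (forall x, E0 (mul0 x one0) x)],
      [/\ (forall x y, E0 (res (mul1 x y)) (mul0 (res x) (res y))),
          E0 (res one1) one0,
          (forall x y, E0 (w (mul0 x y)) (mul0 (w x) (w y))) &
          E0 (w one0) one0] &
      (forall x y, E1 (mul1 (tr x) y) (tr (mul0 x (res y)))) /\
      (forall x y, E1 (mul1 y (tr x)) (tr (mul0 (res y) x)))].
End GenericAxioms.

(* The Burnside Mackey functor A: A(C2/C2) = Z[t]/(t^2 - 2t), an element *)
(* m + n t being the pair (m, n); A(C2/e) = Z.                           *)
Definition burn1 := (int * int)%type.
Definition burn_res (u : burn1) : int := u.1 + 2 * u.2.
Definition burn_tr (k : int) : burn1 := (0, k).
Definition burn_mul (u v : burn1) : burn1 :=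
  (u.1 * v.1, u.1 * v.2 + u.2 * v.1 + 2 * u.2 * v.2).

Section Ntilde.
Variables (R : pzRingType) (bar : R -> R).

Definition anti_involution : Prop :=
  [/\ forall a, bar (bar a) = a,
      forall a b, bar (a * b) = bar b * bar a &
      forall a b, bar (a + b) = bar a + bar b].

(* free abelian group on symbols a (x) b : presents R (x) R^op *)
Definition Pe := {freeg (R * R)%type / int}.
Definition tns (a b : R) : Pe := << (a, b) >>.
(* free abelian group on symbols {a} (inl a) and [a (x) b] (inr (a,b)) :
   presents (Z{R} (+) (R (x) R^op)/C2)/TR *)
Definition P1 := {freeg (R + R * R)%type / int}.
Definition brc (a : R) : P1 := << inl a >>.
Definition sqr (a b : R) : P1 := << inr (a, b) >>.

Definition rel_e (x : Pe) : Prop :=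
  (exists a a' b, x = tns (a + a') b - tns a b - tns a' b) \/
  (exists a b b', x = tns a (b + b') - tns a b - tns a b').

Definition rel_C2 (x : P1) : Prop :=
  [\/ (exists a a' b, x = sqr (a + a') b - sqr a b - sqr a' b),
      (exists a b b', x = sqr a (b + b') - sqr a b - sqr a b'),
      (exists a b, x = sqr a b - sqr (bar b) (bar a)) |
      (exists a b, x = brc (a + b) - brc a - brc b - sqr a (bar b))].

Definition Ee : Pe -> Pe -> Prop := modeq rel_e.
Definition E1 : P1 -> P1 -> Prop := modeq rel_C2.

Definition Nweyl : Pe -> Pe := fglift (fun p : R * R => tns (bar p.2) (bar p.1)).
Definition Nres : P1 -> Pe :=
  fglift (fun g : (R + R * R)%type => match g with
           | inl a => tns a (bar a)
           | inr (a, b) => tns a b + tns (bar b) (bar a)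
           end).
Definition Ntr : Pe -> P1 := fglift (fun p : R * R => sqr p.1 p.2).

Definition Nmul0 (x y : Pe) : Pe :=
  fglift (fun p : R * R =>
    fglift (fun q : R * R => tns (p.1 * q.1) (q.2 * p.2)) y) x.

Definition mul1_gen (g h : (R + R * R)%type) : P1 :=
  match g, h with
  | inl a, inl b => brc (a * b)
  | inl a, inr (b, c) => sqr (a * b) (c * bar a)
  | inr (a, b), inl c => sqr (a * c) (bar c * b)
  | inr (a, b), inr (c, d) => sqr (a * c) (d * b) + sqr (a * bar d) (bar c * b)
  end.
Definition Nmul1 (x y : P1) : P1 :=
  fglift (fun g => fglift (fun h => mul1_gen g h) y) x.

Definition None1 : P1 := brc 1.
Definition None0 : Pe := tns 1 1.

Definition eta1 (u : burn1) : P1 := u.1 *: brc 1 + u.2 *: sqr 1 1.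
Definition eta0 (k : int) : Pe := k *: tns 1 1.

Definition unit_ok : Prop :=
  ((forall u, Ee (Nres (eta1 u)) (eta0 (burn_res u))) /\
   (forall k, E1 (Ntr (eta0 k)) (eta1 (burn_tr k))) /\
   (forall k, Ee (Nweyl (eta0 k)) (eta0 k))) /\
  ((forall u v, E1 (eta1 (burn_mul u v)) (Nmul1 (eta1 u) (eta1 v))) /\
   (forall k l, Ee (eta0 (k * l)) (Nmul0 (eta0 k) (eta0 l)))) /\
  (E1 (eta1 (1, 0)) None1 /\ Ee (eta0 1) None0).
End Ntilde.

(* Both levels of the functor are presented as free abelian groups on symbols
   modulo explicit relators, and every structure map is the (bi)additive
   extension of a formula on symbols. Hence each Mackey and Green identity
   follows, by induction over the free groups, from its instance on symbols,
   which is an identity in R once bar is pushed inside products and sums. For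
   well-definedness on the quotients one shows that the image of every relator,
   and its product with every symbol, is an explicit integer combination of
   relators. *)

From Pilot Require Import Defs.
From HB Require Import structures.
From mathcomp Require Import all_boot all_algebra.
From mathcomp.multinomials Require Import freeg.
From mathcomp.algebra_tactics Require Import ring.
Set Implicit Arguments. Unset Strict Implicit. Unset Printing Implicit Defensive.
Import GRing.Theory.
Local Open Scope ring_scope.

Local Notation span := Defs.span.

Lemma sub_closedMz (V : zmodType) (P : V -> Prop) :
  P 0 -> (forall x y, P x -> P y -> P (x - y)) -> forall x k, P x -> P (x *~ k).
Proof.
move=> P0 PB x k Px.
have PN u : P u -> P (- u) by move=> Pu; rewrite -sub0r; apply: PB.
have PD u v : P u -> P v -> P (u + v).
  by move=> Pu Pv; rewrite -[v]opprK; apply: PB => //; apply: PN.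
have PMn n : P (x *+ n) by elim: n => [|n IHn]; rewrite ?mulr0n ?mulrS //; apply: PD.
by case: k => n; rewrite ?NegzE ?mulrNz -?pmulrn //; apply: PN.
Qed.

Lemma subrACA (V : zmodType) (a b c d : V) : a - b - (c - d) = a - c - (b - d).
Proof. by rewrite !opprB addrACA [RHS]addrACA [- b + _]addrC. Qed.

Section Span.
Variables (V : zmodType) (S : V -> Prop).

Lemma spanN x : span S x -> span S (- x).
Proof. by move=> Sx; rewrite -sub0r; apply: spanB => //; apply: span0. Qed.

Lemma spanD x y : span S x -> span S y -> span S (x + y).
Proof. by move=> Sx Sy; rewrite -[y]opprK; apply: spanB => //; apply: spanN. Qed.

Lemma span_lincomb (l : seq ({r : V | S r} * int)) x :
  x = \sum_(p <- l) sval p.1 *~ p.2 -> span S x.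
Proof.
move=> ->; elim: l => [|[[r Sr] k] l IHl]; first by rewrite big_nil; apply: span0.
rewrite big_cons; apply: spanD => //.
by apply: sub_closedMz; [apply: span0 | apply: spanB | apply: spanS].
Qed.

Lemma eq_modeq x y : x = y -> modeq S x y.
Proof. by move=> ->; rewrite /modeq subrr; apply: span0. Qed.

Lemma modeq_trans y x z : modeq S x y -> modeq S y z -> modeq S x z.
Proof. by rewrite /modeq -[x - z](subrKA y); apply: spanD. Qed.

Lemma modeqB x y x' y' : modeq S x y -> modeq S x' y' -> modeq S (x - x') (y - y').
Proof. by rewrite /modeq subrACA; apply: spanB. Qed.

Lemma modeq_map (W : zmodType) (T : W -> Prop) (f : V -> W) :
  zmod_morphism f -> (forall r, S r -> span T (f r)) ->
  forall x y, modeq S x y -> modeq T (f x) (f y).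
Proof.
move=> fB fS x y; rewrite /modeq -fB.
elim=> [|r /fS //|u v _ Tu _ Tv]; last by rewrite fB; apply: spanB.
by rewrite -(subrr 0) fB subrr; apply: span0.
Qed.

End Span.

Section ZmodMorphism.
Variables (U V : zmodType) (f : U -> V) (fB : zmod_morphism f).
HB.instance Definition _ := GRing.isZmodMorphism.Build U V f fB.

Lemma zmod_morphism0 : f 0 = 0. Proof. exact: raddf0. Qed.
Lemma zmod_morphismD : {morph f : x y / x + y}. Proof. exact: raddfD. Qed.
Lemma zmod_morphismMz k : {morph f : x / x *~ k}. Proof. exact: raddfMz. Qed.
End ZmodMorphism.

Section FreegLift.
Variable K : choiceType.

Lemma freeg_subind (P : {freeg K / int} -> Prop) :
  P 0 -> (forall x y, P x -> P y -> P (x - y)) -> (forall z, P << z >>) ->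
  forall x, P x.
Proof.
move=> P0 PB PU; elim/freeg_ind_dom0 => // k z D _ _ PD.
have PN u : P u -> P (- u) by move=> Pu; rewrite -sub0r; apply: PB.
rewrite -[D]opprK -[k]intz -freegU_mulz; apply: (PB); last exact: PN.
exact: sub_closedMz.
Qed.

Lemma fgliftU (M : lmodType int) (f : K -> M) z : fglift f << z >> = f z.
Proof. by rewrite liftU scale1r. Qed.

End FreegLift.

Section FreegLift2.
Variables (K1 K2 : choiceType) (M : lmodType int) (m : K1 -> K2 -> M).

Definition fglift2 x y := fglift (fun g => fglift (m g) y) x.

Lemma fglift2U g h : fglift2 << g >> << h >> = m g h.
Proof. by rewrite /fglift2 !fgliftU. Qed.

Lemma fglift2Bl y : zmod_morphism (fglift2^~ y).
Proof. exact: lift_is_additive. Qed.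

Lemma fglift2_0l y : fglift2 0 y = 0.
Proof. exact: zmod_morphism0 (fglift2Bl y). Qed.

Lemma fglift2Br x : zmod_morphism (fglift2 x).
Proof.
move=> y y'; elim/freeg_subind: x => [|x x' IHx IHx'|g].
- by rewrite !fglift2_0l subrr.
- by rewrite !fglift2Bl IHx IHx' subrACA.
- by rewrite /fglift2 !fgliftU lift_is_additive.
Qed.

Lemma fglift2_0r x : fglift2 x 0 = 0.
Proof. exact: zmod_morphism0 (fglift2Br x). Qed.
Lemma fglift2Dl x x' y : fglift2 (x + x') y = fglift2 x y + fglift2 x' y.
Proof. exact: (zmod_morphismD (fglift2Bl y)). Qed.
Lemma fglift2Dr x y y' : fglift2 x (y + y') = fglift2 x y + fglift2 x y'.
Proof. exact: (zmod_morphismD (fglift2Br x)). Qed.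
Lemma fglift2Mzl x y k : fglift2 (x *~ k) y = fglift2 x y *~ k.
Proof. exact: (zmod_morphismMz (fglift2Bl y) k). Qed.
Lemma fglift2Mzr x y k : fglift2 x (y *~ k) = fglift2 x y *~ k.
Proof. exact: (zmod_morphismMz (fglift2Br x) k). Qed.
End FreegLift2.

Lemma fglift2A_generators (K : choiceType) (m : K -> K -> {freeg K / int}) :
  (forall g h k, fglift2 m << g >> (m h k) = fglift2 m (m g h) << k >>) ->
  forall x y z, fglift2 m x (fglift2 m y z) = fglift2 m (fglift2 m x y) z.
Proof.
move=> mA x y z; elim/freeg_subind: x => [|x x' IHx IHx'|g].
- by rewrite !fglift2_0l.
- by rewrite !fglift2Bl IHx IHx'.
elim/freeg_subind: y => [|y y' IHy IHy'|h].
- by rewrite ?(fglift2_0l, fglift2_0r).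
- by rewrite ?(fglift2Bl, fglift2Br) IHy IHy'.
elim/freeg_subind: z => [|z z' IHz IHz'|k].
- by rewrite ?(fglift2_0l, fglift2_0r).
- by rewrite ?(fglift2Bl, fglift2Br) IHz IHz'.
by rewrite !fglift2U.
Qed.

Lemma fglift2_idl (K1 K2 : choiceType) (m : K1 -> K2 -> {freeg K2 / int}) e :
  (forall h, fglift2 m e << h >> = << h >>) -> forall y, fglift2 m e y = y.
Proof.
move=> me; elim/freeg_subind => [|y y' IHy IHy'|//]; first exact: fglift2_0r.
by rewrite fglift2Br IHy IHy'.
Qed.

Lemma fglift2_idr (K1 K2 : choiceType) (m : K1 -> K2 -> {freeg K1 / int}) e :
  (forall g, fglift2 m << g >> e = << g >>) -> forall x, fglift2 m x e = x.
Proof.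
move=> me; elim/freeg_subind => [|x x' IHx IHx'|//]; first exact: fglift2_0l.
by rewrite fglift2Bl IHx IHx'.
Qed.

Ltac freeg_ring := apply/eqP/freeg_eqP => w;
  rewrite /tns /brc /sqr ?(coeffD, coeffB, coeffN, raddfMz, coeffU, coeff0); ring.

Local Notation summand p k := (exist _ _ p, k%Z).

Section Ntilde.
Variables (R : pzRingType) (bar : R -> R).
Implicit Types a b c d : R.
Hypothesis barP : anti_involution bar.

Lemma barK a : bar (bar a) = a. Proof. by case: barP. Qed.
Lemma barM a b : bar (a * b) = bar b * bar a. Proof. by case: barP. Qed.
Lemma barD a b : bar (a + b) = bar a + bar b. Proof. by case: barP. Qed.
Lemma bar1 : bar 1 = 1.
Proof. by have := barM (bar 1) 1; rewrite mulr1 !barK mulr1 => /esym. Qed.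

Ltac bar_norm := rewrite ?(barD, barM, barK, bar1, mulrDr, mulrDl, mulrA, mulr1, mul1r).

HB.instance Definition _ :=
  GRing.isZmodMorphism.Build (P1 R) (Pe R) (Nres bar) (lift_is_additive _).
HB.instance Definition _ :=
  GRing.isZmodMorphism.Build (Pe R) (P1 R) (@Ntr R) (lift_is_additive _).
HB.instance Definition _ :=
  GRing.isZmodMorphism.Build (Pe R) (Pe R) (Nweyl bar) (lift_is_additive _).

Lemma Nres_brc a : Nres bar (brc a) = tns a (bar a). Proof. exact: fgliftU. Qed.
Lemma Nres_sqr a b : Nres bar (sqr a b) = tns a b + tns (bar b) (bar a).
Proof. exact: fgliftU. Qed.
Lemma Ntr_tns a b : Ntr (tns a b) = sqr a b. Proof. exact: fgliftU. Qed.
Lemma Nweyl_tns a b : Nweyl bar (tns a b) = tns (bar b) (bar a). Proof. exact: fgliftU. Qed.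

Lemma Nmul1E : Nmul1 bar = fglift2 (mul1_gen bar). Proof. by []. Qed.
Lemma Nmul0E : @Nmul0 R = fglift2 (fun p q : R * R => tns (p.1 * q.1) (q.2 * p.2)).
Proof. by []. Qed.

(* [/=] folds the structure projections left by [raddfD] back into [Nres], [Ntr]
   and [Nweyl], so that the generator equations apply again. *)
Ltac expand := do 3 rewrite /= ?(fglift2U, fglift2Dl, fglift2Dr, raddfD,
  Nres_brc, Nres_sqr, Ntr_tns, Nweyl_tns).

Lemma rel_eDl a a' b : rel_e (tns (a + a') b - tns a b - tns a' b).
Proof. by left; exists a, a', b. Qed.
Lemma rel_eDr a b b' : rel_e (tns a (b + b') - tns a b - tns a b').
Proof. by right; exists a, b, b'. Qed.
Lemma rel_C2Dl a a' b : rel_C2 bar (sqr (a + a') b - sqr a b - sqr a' b).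
Proof. by constructor 1; exists a, a', b. Qed.
Lemma rel_C2Dr a b b' : rel_C2 bar (sqr a (b + b') - sqr a b - sqr a b').
Proof. by constructor 2; exists a, b, b'. Qed.
Lemma rel_C2_swap a b : rel_C2 bar (sqr a b - sqr (bar b) (bar a)).
Proof. by constructor 3; exists a, b. Qed.
Lemma rel_C2_brcD a b : rel_C2 bar (brc (a + b) - brc a - brc b - sqr a (bar b)).
Proof. by constructor 4; exists a, b. Qed.

Ltac span_by l := apply: (span_lincomb (l := l)); rewrite ?big_cons ?big_nil /=;
  bar_norm; freeg_ring.

Lemma Nres_wd x y : E1 bar x y -> Ee (Nres bar x) (Nres bar y).
Proof.
apply: modeq_map => [|r]; first exact: raddfB.
case=> [[a [a' [b ->]]]|[a [b [b' ->]]]|[a [b ->]]|[a [b ->]]]; rewrite !raddfB; expand.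
- span_by [:: summand (rel_eDl a a' b) 1; summand (rel_eDr (bar b) (bar a) (bar a')) 1].
- span_by [:: summand (rel_eDr a b b') 1; summand (rel_eDl (bar b) (bar b') (bar a)) 1].
- span_by (Nil ({r : Pe R | rel_e r} * int)).
- span_by [:: summand (rel_eDl a b (bar a + bar b)) 1; summand (rel_eDr a (bar a) (bar b)) 1;
              summand (rel_eDr b (bar a) (bar b)) 1].
Qed.

Lemma Ntr_wd x y : Ee x y -> E1 bar (Ntr x) (Ntr y).
Proof.
apply: modeq_map => [|r]; first exact: raddfB.
case=> [[a [a' [b ->]]]|[a [b [b' ->]]]]; rewrite !raddfB; expand; apply: spanS.
- exact: rel_C2Dl.
- exact: rel_C2Dr.
Qed.

Lemma Nweyl_wd x y : Ee x y -> Ee (Nweyl bar x) (Nweyl bar y).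
Proof.
apply: modeq_map => [|r]; first exact: raddfB.
case=> [[a [a' [b ->]]]|[a [b [b' ->]]]]; rewrite !raddfB; expand; rewrite barD; apply: spanS.
- exact: rel_eDr.
- exact: rel_eDl.
Qed.

Lemma NweylK x : Nweyl bar (Nweyl bar x) = x.
Proof.
elim/freeg_subind: x => [|x y IHx IHy|[a b]]; first by rewrite !raddf0.
  by rewrite !raddfB /= IHx IHy.
by expand; rewrite !barK.
Qed.

Lemma Nweyl_res x : Nweyl bar (Nres bar x) = Nres bar x.
Proof.
elim/freeg_subind: x => [|x y IHx IHy|[a|[a b]]]; first by rewrite !raddf0.
  by rewrite !raddfB /= IHx IHy.
all: by expand; rewrite !barK // addrC.
Qed.

Lemma Ntr_weyl x : E1 bar (Ntr (Nweyl bar x)) (Ntr x).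
Proof.
elim/freeg_subind: x => [|x y IHx IHy|[a b]]; first by rewrite !raddf0; apply: eq_modeq.
  by rewrite !raddfB; apply: modeqB.
by expand; span_by [:: summand (rel_C2_swap a b) (-1)].
Qed.

Lemma Nres_tr x : Nres bar (Ntr x) = x + Nweyl bar x.
Proof.
elim/freeg_subind: x => [|x y IHx IHy|[a b]]; first by rewrite !raddf0 addr0.
  by rewrite !raddfB /= IHx IHy opprD addrACA.
by expand.
Qed.

Lemma Ntilde_mackey : C2_mackey (E1 bar) (@Ee R) (Nres bar) (@Ntr R) (Nweyl bar).
Proof.
repeat split.
- exact: Nres_wd.
- exact: Ntr_wd.
- exact: Nweyl_wd.
- by move=> x y; apply: eq_modeq; rewrite raddfD.
- by move=> x y; apply: eq_modeq; rewrite raddfD.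
- by move=> x y; apply: eq_modeq; rewrite raddfD.
- by move=> x; apply: eq_modeq; rewrite NweylK.
- by move=> x; apply: eq_modeq; rewrite Nweyl_res.
- exact: Ntr_weyl.
- by move=> x; apply: eq_modeq; rewrite Nres_tr.
Qed.

Lemma Nmul1_wdl y x x' : E1 bar x x' -> E1 bar (Nmul1 bar x y) (Nmul1 bar x' y).
Proof.
rewrite Nmul1E; apply: (modeq_map (f := fglift2 _ ^~ y)) => [|r rel_r].
  exact: fglift2Bl.
elim/freeg_subind: y => [|y y' IHy IHy'|g]; rewrite ?fglift2_0r ?fglift2Br.
- exact: span0.
- exact: spanB.
case: rel_r => [[a [a' [b ->]]]|[a [b [b' ->]]]|[a [b ->]]|[a [b ->]]]; case: g => [c|[c d]];
  rewrite !fglift2Bl; expand.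
- span_by [:: summand (rel_C2Dl (a*c) (a'*c) (bar c*b)) 1].
- span_by [:: summand (rel_C2Dl (a*c) (a'*c) (d*b)) 1;
              summand (rel_C2Dl (a*bar d) (a'*bar d) (bar c*b)) 1].
- span_by [:: summand (rel_C2Dr (a*c) (bar c*b) (bar c*b')) 1].
- span_by [:: summand (rel_C2Dr (a*c) (d*b) (d*b')) 1;
              summand (rel_C2Dr (a*bar d) (bar c*b) (bar c*b')) 1].
- span_by [:: summand (rel_C2_swap (a*c) (bar c*b)) 1].
- span_by [:: summand (rel_C2_swap (a*c) (d*b)) 1;
              summand (rel_C2_swap (a*bar d) (bar c*b)) 1].
- span_by [:: summand (rel_C2_brcD (a*c) (b*c)) 1].
- span_by [:: summand (rel_C2Dl (a*c) (b*c) (d*bar a + d*bar b)) 1;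
              summand (rel_C2Dr (a*c) (d*bar a) (d*bar b)) 1;
              summand (rel_C2Dr (b*c) (d*bar a) (d*bar b)) 1;
              summand (rel_C2_swap (b*c) (d*bar a)) 1].
Qed.

Lemma Nmul1_wdr x y y' : E1 bar y y' -> E1 bar (Nmul1 bar x y) (Nmul1 bar x y').
Proof.
rewrite Nmul1E; apply: (modeq_map (f := fglift2 _ x)) => [|r rel_r]; first exact: fglift2Br.
elim/freeg_subind: x => [|x x' IHx IHx'|g]; rewrite ?fglift2_0l ?fglift2Bl.
- exact: span0.
- exact: spanB.
case: rel_r => [[a [a' [b ->]]]|[a [b [b' ->]]]|[a [b ->]]|[a [b ->]]]; case: g => [c|[c d]];
  rewrite !fglift2Br; expand.
- span_by [:: summand (rel_C2Dl (c*a) (c*a') (b*bar c)) 1].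
- span_by [:: summand (rel_C2Dl (c*a) (c*a') (b*d)) 1;
              summand (rel_C2Dr (c*bar b) (bar a*d) (bar a'*d)) 1].
- span_by [:: summand (rel_C2Dr (c*a) (b*bar c) (b'*bar c)) 1].
- span_by [:: summand (rel_C2Dr (c*a) (b*d) (b'*d)) 1;
              summand (rel_C2Dl (c*bar b) (c*bar b') (bar a*d)) 1].
- span_by [:: summand (rel_C2_swap (c*a) (b*bar c)) 1].
- span_by (Nil ({r : P1 R | rel_C2 bar r} * int)).
- span_by [:: summand (rel_C2_brcD (c*a) (c*b)) 1].
- span_by [:: summand (rel_C2Dl (c*a) (c*b) (bar a*d + bar b*d)) 1;
              summand (rel_C2Dr (c*a) (bar a*d) (bar b*d)) 1;
              summand (rel_C2Dr (c*b) (bar a*d) (bar b*d)) 1].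
Qed.

Lemma Nmul0_wdl (y x x' : Pe R) : Ee x x' -> Ee (Nmul0 x y) (Nmul0 x' y).
Proof.
rewrite Nmul0E; apply: (modeq_map (f := fglift2 _ ^~ y)) => [|r rel_r].
  exact: fglift2Bl.
elim/freeg_subind: y => [|y y' IHy IHy'|[c d]]; rewrite ?fglift2_0r ?fglift2Br.
- exact: span0.
- exact: spanB.
case: rel_r => [[a [a' [b ->]]]|[a [b [b' ->]]]]; rewrite !fglift2Bl; expand.
- span_by [:: summand (rel_eDl (a*c) (a'*c) (d*b)) 1].
- span_by [:: summand (rel_eDr (a*c) (d*b) (d*b')) 1].
Qed.

Lemma Nmul0_wdr (x y y' : Pe R) : Ee y y' -> Ee (Nmul0 x y) (Nmul0 x y').
Proof.
rewrite Nmul0E; apply: (modeq_map (f := fglift2 _ x)) => [|r rel_r]; first exact: fglift2Br.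
elim/freeg_subind: x => [|x x' IHx IHx'|[c d]]; rewrite ?fglift2_0l ?fglift2Bl.
- exact: span0.
- exact: spanB.
case: rel_r => [[a [a' [b ->]]]|[a [b [b' ->]]]]; rewrite !fglift2Br; expand.
- span_by [:: summand (rel_eDl (c*a) (c*a') (b*d)) 1].
- span_by [:: summand (rel_eDr (c*a) (b*d) (b'*d)) 1].
Qed.

Lemma Nmul1A x y z : Nmul1 bar x (Nmul1 bar y z) = Nmul1 bar (Nmul1 bar x y) z.
Proof.
rewrite Nmul1E; apply: fglift2A_generators.
by case=> [a|[a b]] [c|[c d]] [e|[e f]]; expand; bar_norm; freeg_ring.
Qed.

Lemma Nmul0A (x y z : Pe R) : Nmul0 x (Nmul0 y z) = Nmul0 (Nmul0 x y) z.
Proof. by rewrite Nmul0E; apply: fglift2A_generators => -[a b] [c d] [e f]; expand; bar_norm. Qed.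

Lemma Nmul1_1l x : Nmul1 bar (None1 R) x = x.
Proof. by rewrite Nmul1E; apply: fglift2_idl => -[a|[a b]]; expand; bar_norm. Qed.

Lemma Nmul1_1r x : Nmul1 bar x (None1 R) = x.
Proof. by rewrite Nmul1E; apply: fglift2_idr => -[a|[a b]]; expand; bar_norm. Qed.

Lemma Nmul0_1l x : Nmul0 (None0 R) x = x.
Proof. by rewrite Nmul0E; apply: fglift2_idl => -[a b]; expand; bar_norm. Qed.

Lemma Nmul0_1r x : Nmul0 x (None0 R) = x.
Proof. by rewrite Nmul0E; apply: fglift2_idr => -[a b]; expand; bar_norm. Qed.

Lemma Nres_mul x y : Nres bar (Nmul1 bar x y) = Nmul0 (Nres bar x) (Nres bar y).
Proof.
rewrite Nmul1E Nmul0E.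
elim/freeg_subind: x => [|x x' IHx IHx'|g]; first by rewrite !(fglift2_0l, raddf0).
  by rewrite !(fglift2Bl, raddfB) /= IHx IHx'.
elim/freeg_subind: y => [|y y' IHy IHy'|h]; first by rewrite !(fglift2_0r, raddf0).
  by rewrite !(fglift2Br, raddfB) /= IHy IHy'.
by case: g h => [a|[a b]] [c|[c d]]; expand; bar_norm; freeg_ring.
Qed.

Lemma Nweyl_mul x y : Nweyl bar (Nmul0 x y) = Nmul0 (Nweyl bar x) (Nweyl bar y).
Proof.
rewrite Nmul0E.
elim/freeg_subind: x => [|x x' IHx IHx'|g]; first by rewrite !(fglift2_0l, raddf0).
  by rewrite !(fglift2Bl, raddfB) /= IHx IHx'.
elim/freeg_subind: y => [|y y' IHy IHy'|h]; first by rewrite !(fglift2_0r, raddf0).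
  by rewrite !(fglift2Br, raddfB) /= IHy IHy'.
by case: g h => [a b] [c d]; expand; bar_norm.
Qed.

Lemma Ntr_mull x y : E1 bar (Nmul1 bar (Ntr x) y) (Ntr (Nmul0 x (Nres bar y))).
Proof.
rewrite Nmul1E Nmul0E.
elim/freeg_subind: x => [|x x' IHx IHx'|g].
- by apply: eq_modeq; rewrite !(fglift2_0l, raddf0).
- by rewrite !(fglift2Bl, raddfB) /=; apply: modeqB.
elim/freeg_subind: y => [|y y' IHy IHy'|h].
- by apply: eq_modeq; rewrite !(fglift2_0r, raddf0).
- by rewrite !(fglift2Br, raddfB) /=; apply: modeqB.
by apply: eq_modeq; case: g h => [a b] [c|[c d]]; expand; bar_norm; freeg_ring.
Qed.

Lemma Ntr_mulr x y : E1 bar (Nmul1 bar y (Ntr x)) (Ntr (Nmul0 (Nres bar y) x)).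
Proof.
rewrite Nmul1E Nmul0E.
elim/freeg_subind: x => [|x x' IHx IHx'|g].
- by apply: eq_modeq; rewrite !(fglift2_0r, raddf0).
- by rewrite !(fglift2Br, raddfB) /=; apply: modeqB.
elim/freeg_subind: y => [|y y' IHy IHy'|h].
- by apply: eq_modeq; rewrite !(fglift2_0l, raddf0).
- by rewrite !(fglift2Bl, raddfB) /=; apply: modeqB.
case: g h => [a b] [c|[c d]]; expand.
- by apply: eq_modeq; bar_norm.
- by rewrite /modeq; span_by [:: summand (rel_C2_swap (bar d * a) (b * bar c)) (-1)].
Qed.

Lemma eta1E u : eta1 R u = brc 1 *~ u.1 + sqr 1 1 *~ u.2.
Proof. by rewrite /eta1 -!scaler_int !intz. Qed.

Lemma eta0E k : eta0 R k = tns 1 1 *~ k.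
Proof. by rewrite /eta0 -scaler_int intz. Qed.

Lemma Ntilde_unit : unit_ok bar.
Proof.
repeat split => *; apply: eq_modeq;
  rewrite /burn_res /burn_tr /burn_mul /None1 /None0 ?eta1E ?eta0E ?Nmul1E ?Nmul0E /=;
  rewrite ?(raddfD, raddfMz, fglift2Dl, fglift2Dr, fglift2Mzl, fglift2Mzr); expand; bar_norm;
  freeg_ring.
Qed.

Lemma Ntilde_green :
  C2_green (E1 bar) (@Ee R) (Nres bar) (@Ntr R) (Nweyl bar)
           (Nmul1 bar) (@Nmul0 R) (None1 R) (None0 R).
Proof.
split; first exact: Ntilde_mackey.
repeat split; move=> *.
- apply: (modeq_trans (y := Nmul1 bar _ _)); [apply: Nmul1_wdl | apply: Nmul1_wdr]; assumption.
- apply: (modeq_trans (y := Nmul0 _ _)); [apply: Nmul0_wdl | apply: Nmul0_wdr]; assumption.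
- by apply: eq_modeq; rewrite Nmul1E fglift2Dr.
- by apply: eq_modeq; rewrite Nmul1E fglift2Dl.
- by apply: eq_modeq; rewrite Nmul1A.
- by apply: eq_modeq; rewrite Nmul1_1l.
- by apply: eq_modeq; rewrite Nmul1_1r.
- by apply: eq_modeq; rewrite Nmul0E fglift2Dr.
- by apply: eq_modeq; rewrite Nmul0E fglift2Dl.
- by apply: eq_modeq; rewrite Nmul0A.
- by apply: eq_modeq; rewrite Nmul0_1l.
- by apply: eq_modeq; rewrite Nmul0_1r.
- by apply: eq_modeq; rewrite Nres_mul.
- by apply: eq_modeq; rewrite /None1 Nres_brc bar1.
- by apply: eq_modeq; rewrite Nweyl_mul.
- by apply: eq_modeq; rewrite /None0 Nweyl_tns bar1.
- exact: Ntr_mull.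
- exact: Ntr_mulr.
Qed.

End Ntilde.

Theorem mainTheorem16 (R : pzRingType) (bar : R -> R) :
  anti_involution bar ->
  C2_green (E1 bar) (@Ee R) (Nres bar) (@Ntr R) (Nweyl bar)
           (Nmul1 bar) (@Nmul0 R) (@None1 R) (@None0 R)
  /\ unit_ok bar.
Proof. by move=> barP; split; [exact: Ntilde_green | exact: Ntilde_unit]. Qed.
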